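(* Let $\rho$ be any pairing of $\{1,\dots,2n\}$ and $\pi$ any planar pairing of $\{1,\dots,2n\}$. Then $$\mathrm{sign}_{OE}(\pi)\,(-1)^{c(\pi\cup\rho)}\,(-1)^{n}\,2^{c(\pi\cup\rho)}=\sum_{\sigma\ \text{planar pairing}}\mathcal P_{\sigma,\rho}\,\mathrm{sign}_{OE}(\sigma)\,2^{c(\pi\cup\sigma)}.$$
   Context: A pairing of $\{1,\dots,2n\}$ is a partition into 2-element blocks; $\{a,c\},\{b,d\}$ cross if $a<b<c<d$; planar = no crossings; planar pairings are odd-even (each pair has an odd and even element), and $\mathrm{sign}_{OE}(\sigma)$ is the sign of the permutation $(\sigma(1)/2,\sigma(3)/2,\dots,\sigma(2n-1)/2)$. $c(\pi\cup\rho)$ is the number of connected components of the multigraph on $\{1,\dots,2n\}$ with an edge for each pair of $\pi$ and each pair of $\rho$. $\mathcal P_{\sigma,\rho}$ is the coefficient of $\sigma$ when $\rho$ is written as a formal integer combination of planar pairings by repeatedly applying the rule: if $\{a,c\},\{b,d\}$ are pairs with $a<b<c<d$, replace $\{a,c\},\{b,d\},\text{rest}$ by $-(\{a,b\},\{c,d\},\text{rest})-(\{a,d\},\{b,c\},\text{rest})$ (the result is independent of choices; for planar $\rho$, $\mathcal P_{\sigma,\rho}=\mathbf 1_{\sigma=\rho}$). *)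

From HB Require Import structures.
From mathcomp Require Import all_boot all_order all_algebra all_fingroup.
Set Implicit Arguments. Unset Strict Implicit. Unset Printing Implicit Defensive.
Import GRing.Theory.

(* Points 1..2n of the paper are represented 0-indexed as 'I_(n.*2):
   paper point i  <->  ordinal i-1.  A pairing is a fixed-point-free
   involution sigma : {ffun 'I_(n.*2) -> 'I_(n.*2)}; its blocks are {i, sigma i}. *)
Definition pairing_of (n : nat) := {ffun 'I_(n.*2) -> 'I_(n.*2)}.

Definition is_pairing n (s : pairing_of n) : bool :=
  [forall i, (s i != i) && (s (s i) == i)].

Definition crosses n (s : pairing_of n) (a b : 'I_(n.*2)) : bool :=
  [&& a < b, b < s a & s a < s b].

Definition planar n (s : pairing_of n) : bool :=
  [forall a, forall b, ~~ crosses s a b].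

(* value of s at a natural-number position (0 outside the range) *)
Definition at_nat n (s : pairing_of n) (i : nat) : nat :=
  if insub i is Some j then val (s j) else 0%N.

(* sign_OE: sign of the permutation k |-> s(2k-1)/2 (paper, 1-indexed),
   i.e. k |-> (s (2k))./2 for 0-indexed k : 'I_n.  It is 0 if this map is
   not a permutation (never the case for planar pairings). *)
Definition sign_OE n (s : pairing_of n) : int :=
  match [pick p : 'S_n | [forall k : 'I_n, val (p k) == (at_nat s k.*2)./2]] with
  | Some p => ((-1) ^+ odd_perm p)%R
  | None => 0%R
  end.

(* c(pi u rho): number of connected components of the multigraph on the points
   with one edge per block of pi and one per block of rho. *)
Definition union_rel n (p r : pairing_of n) : rel 'I_(n.*2) :=
  fun x y => (p x == y) || (r x == y) || (p y == x) || (r y == x).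

Definition ncomp n (p r : pairing_of n) : nat :=
  n_comp (union_rel p r) 'I_(n.*2).

Definition repair n (s : pairing_of n) (x1 y1 x2 y2 : 'I_(n.*2)) : pairing_of n :=
  [ffun x => if x == x1 then y1 else if x == y1 then x1
             else if x == x2 then y2 else if x == y2 then x2 else s x].

(* Coefficient of sigma obtained by repeatedly resolving crossings:
   {a,c},{b,d} (a<b<c<d) -> -({a,b},{c,d}) - ({a,d},{b,c}).
   The crossing resolved at each step is chosen by [pick] (the result is
   independent of choices).  Each resolution strictly decreases the number of
   crossings, so fuel (n.*2)^2 suffices. *)
Fixpoint Pcoef_fuel n (fuel : nat) (sigma rho : pairing_of n) : int :=
  if planar rho then Posz (sigma == rho) else
  match fuel with
  | 0 => 0%R
  | fuel'.+1 =>
    match [pick ab : 'I_(n.*2) * 'I_(n.*2) | crosses rho ab.1 ab.2] with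
    | Some (a, b) =>
        let c := rho a in let d := rho b in
        (- Pcoef_fuel fuel' sigma (repair rho a b c d)
         - Pcoef_fuel fuel' sigma (repair rho a d b c))%R
    | None => 0%R
    end
  end.

Definition Pcoef n (sigma rho : pairing_of n) : int :=
  Pcoef_fuel ((n.*2) ^ 2) sigma rho.

From HB Require Import structures.
From mathcomp Require Import all_boot all_order all_algebra all_fingroup.
From mathcomp Require Import zify ring.
Set Implicit Arguments. Unset Strict Implicit. Unset Printing Implicit Defensive.
Import GRing.Theory.

(* Let [s] be the permutation [x |-> pi (rho x)].  Its cycles come in mirror
   pairs [O], [pi O], and each component of [pi ∪ rho] is the union of such a
   pair, so [s] has [2 c(pi ∪ rho)] cycles.  Resolving a crossing of [rho]
   multiplies [s] by two transpositions, each of which merges or splits one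
   cycle; going through the cases gives the skein relation
   [(-2)^c(rho) = - (-2)^c(rho_1) - (-2)^c(rho_2)], which is the rule defining
   [P].  Since resolving a crossing lowers the number of crossings, both sides
   of the identity are determined by their values at planar [rho].  There the
   identity is a sign computation: planar pairings join points of opposite
   parity, and on the even points [s] acts as [sigma_rho sigma_pi^-1], where
   [sigma_pi] is the permutation defining [sign_OE pi]; a permutation of [n]
   points with [k] cycles has sign [(-1)^(n + k)]. *)

Section TpermOrbits.
Variable T : finType.
Implicit Types (s : {perm T}) (x y z : T).
Local Open Scope group_scope.

Lemma porbit_trans s x y z :
  x \in porbit s y -> y \in porbit s z -> x \in porbit s z.
Proof. by rewrite -!eq_porbit_mem => /eqP ->. Qed.

Lemma mem_porbit_perm s x : s x \in porbit s x.
Proof. by have := mem_porbit s 1 x; rewrite expg1. Qed.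

Lemma mem_porbit_permr s x y : y \in porbit s x -> s y \in porbit s x.
Proof. exact/porbit_trans/mem_porbit_perm. Qed.

Lemma card_porbits_tpermM s x y : x != y ->
  #|porbits (tperm x y * s)| + (x \notin porbit s y).*2 = #|porbits s| + 1.
Proof. by move=> nxy; have := porbits_mul_tperm s x y; rewrite /= nxy. Qed.

Lemma mem_porbit_tpermM s x y : x != y ->
  (x \in porbit (tperm x y * s) y) = (x \notin porbit s y).
Proof.
move=> nxy; have := card_porbits_tpermM s nxy.
have := card_porbits_tpermM (tperm x y * s) nxy; rewrite tpermKg.
by case: (x \in porbit (tperm x y * s) y); case: (x \in porbit s y) => /=; lia.
Qed.

Lemma porbit_tpermM_out s x y z : x \notin porbit s z -> y \notin porbit s z ->
  porbit (tperm x y * s) z = porbit s z.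
Proof.
move=> sxz syz.
suffices exp_id i : ((tperm x y * s) ^+ i) z = (s ^+ i) z.
  by apply/porbit_setP => u; apply/porbitP/porbitP => -[i ->]; exists i.
elim: i => // i IHi; rewrite !expgSr (permM ((tperm x y * s) ^+ i)).
rewrite (permM (s ^+ i)) IHi permM tpermD //.
  by apply: contraNneq sxz => ->; apply: mem_porbit.
by apply: contraNneq syz => ->; apply: mem_porbit.
Qed.

Lemma porbit_tpermM_mergel s x y z : x \notin porbit s y -> z \in porbit s x ->
  z \in porbit (tperm x y * s) x.
Proof.
move=> nxy /porbitP [k ->].
have xy : x != y by apply: contraNneq nxy => ->; apply: porbit_id.
have nyx : y \notin porbit s x by rewrite porbit_sym.
have yx_merged : y \in porbit (tperm x y * s) x by rewrite porbit_sym mem_porbit_tpermM.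
elim: k => [|k IHk]; first by rewrite expg0 perm1 porbit_id.
rewrite expgSr (permM (s ^+ k)); set w := (s ^+ k) x in IHk *.
have -> : s w = (tperm x y * s) (if w == x then y else w).
  rewrite permM; have [->|wx] := eqVneq w x; first by rewrite tpermR.
  rewrite tpermD 1?eq_sym //.
  by apply: contraNneq nyx => <-; apply: mem_porbit.
by apply: mem_porbit_permr; case: ifP.
Qed.

Lemma porbit_tpermM_merger s x y z : x \notin porbit s y -> z \in porbit s y ->
  z \in porbit (tperm x y * s) x.
Proof.
move=> nxy Hz; have xy : x != y by apply: contraNneq nxy => ->; apply: porbit_id.
have := porbit_tpermM_mergel (_ : y \notin porbit s x) Hz.
rewrite tpermC porbit_sym => /(_ nxy) /porbit_trans; apply.
by rewrite porbit_sym mem_porbit_tpermM.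
Qed.

End TpermOrbits.

(* The identity when [f] is not injective. *)
Definition ffun_perm (T : finType) (f : {ffun T -> T}) : {perm T} :=
  insubd (1%g : {perm T}) f.

Lemma ffun_permE (T : finType) (f : {ffun T -> T}) :
  injective f -> ffun_perm f =1 f.
Proof.
move=> f_inj x; rewrite /ffun_perm.
suff -> : insubd (1%g : {perm T}) f = perm f_inj by rewrite permE.
apply/val_inj; rewrite val_insubd (introT (injectiveP f) f_inj).
by apply/ffunP => y; rewrite pvalE permE.
Qed.

Definition pair_perm (T : finType) (p r : {ffun T -> T}) : {perm T} :=
  (ffun_perm r * ffun_perm p)%g.

Definition pair_rel (T : finType) (p r : {ffun T -> T}) : rel T :=
  fun x y => (p x == y) || (r x == y) || (p y == x) || (r y == x).

Section PairPerm.
Variable T : finType.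
Variables p r : {ffun T -> T}.
Hypotheses (pK : involutive p) (rK : involutive r).
Hypotheses (p_fix : forall x, p x != x) (r_fix : forall x, r x != x).
Local Open Scope group_scope.
Local Notation s := (pair_perm p r).

Lemma pair_permE x : s x = p (r x).
Proof. by rewrite permM !ffun_permE //; apply: can_inj. Qed.

Lemma pair_permVE x : s^-1 x = r (p x).
Proof. by rewrite -{1}[x]pK -{1}[p x]rK -pair_permE permK. Qed.

Lemma invol_pair_permX i x : p ((s ^+ i) x) = ((s^-1) ^+ i) (p x).
Proof.
elim: i => [|i IHi]; first by rewrite !expg0 !perm1.
by rewrite !expgSr (permM (s ^+ i)) (permM (s^-1 ^+ i)) pair_permE pK pair_permVE -IHi pK.
Qed.

Lemma mem_porbit_invol x y : (p y \in porbit s (p x)) = (y \in porbit s x).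
Proof.
suff imp z t : t \in porbit s z -> p t \in porbit s (p z).
  by apply/idP/idP => [/imp|/imp //]; rewrite !pK.
by case/porbitP => i ->; rewrite invol_pair_permX -porbitV mem_porbit.
Qed.

(* The cycle through [p x] is the mirror image of the cycle through [x]: were
   they equal, [p] or [r] would have a fixed point at the middle of the cycle. *)
Lemma invol_notin_porbit x : p x \notin porbit s x.
Proof.
apply/negP => /porbitP [i]; rewrite -(odd_double_half i).
set j := i./2; set y := (s ^+ j) x => Hi.
have : p y = (s ^+ (odd i + j)) x.
  by rewrite invol_pair_permX expgVn Hi -addnn addnA expgD permM permK.
case: (odd i); rewrite ?add1n ?add0n -/y.
- rewrite expgSr permM -/y pair_permE => /(can_inj pK) /eqP.
  by rewrite eq_sym (negbTE (r_fix _)).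
- by move/eqP; rewrite (negbTE (p_fix _)).
Qed.

Lemma mem_porbit_r y : r y \in porbit s (p y).
Proof. by rewrite porbit_sym -{1}[y]rK -pair_permE mem_porbit_perm. Qed.

Lemma pair_rel_sym : symmetric (pair_rel p r).
Proof. by move=> x y; rewrite /pair_rel; do !case: eqP. Qed.

(* A component of [p ∪ r] is the union of a cycle of [s] and its mirror image. *)
Let comp x : pred T := [pred y | (y \in porbit s x) || (y \in porbit s (p x))].

Lemma connect_pair_rel x y : connect (pair_rel p r) x y = (y \in comp x).
Proof.
have edge_p z : pair_rel p r z (p z) by rewrite /pair_rel eqxx.
have edge_r z : pair_rel p r z (r z) by rewrite /pair_rel eqxx orbT.
have comp_p z : z \in comp x -> p z \in comp x.
  by case/orP => H; rewrite inE -{1}[x]pK !mem_porbit_invol H ?orbT.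
have comp_r z : z \in comp x -> r z \in comp x.
  move/comp_p; case/orP => H; apply/orP; [left|right];
  exact: porbit_trans (mem_porbit_r z) H.
have conn_porbit z t : t \in porbit s z -> connect (pair_rel p r) z t.
  case/porbitP => i ->; elim: i => [|i IHi]; first by rewrite expg0 perm1.
  rewrite expgSr permM pair_permE; apply: connect_trans IHi _.
  exact: connect_trans (connect1 (edge_r _)) (connect1 (edge_p _)).
apply/idP/idP => [Cxy | /orP [] Hy].
- have cl : closed (pair_rel p r) (comp x).
    apply: (intro_closed (sym_connect_sym pair_rel_sym)) => u v.
    rewrite /pair_rel -!orbA => /or4P [] /eqP <- Hu.
    + exact: comp_p.
    + exact: comp_r.
    + by have := comp_p _ Hu; rewrite pK.
    + by have := comp_r _ Hu; rewrite rK.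
  by rewrite -(closed_connect cl Cxy) inE porbit_id.
- exact: conn_porbit.
- exact: connect_trans (connect1 (edge_p x)) (conn_porbit _ _ Hy).
Qed.

Lemma n_comp_pair_rel : (n_comp (pair_rel p r) T).*2 = #|porbits s|.
Proof.
have csym := sym_connect_sym pair_rel_sym.
have root_eq x1 x2 : roots (pair_rel p r) x1 -> roots (pair_rel p r) x2 ->
    connect (pair_rel p r) x1 x2 -> x1 = x2.
  by move=> /eqP h1 /eqP h2 /(fingraph.rootP csym); rewrite h1 h2.
set Rs := [set x | roots (pair_rel p r) x].
have -> : n_comp (pair_rel p r) T = #|Rs|.
  by apply: eq_card => x; rewrite !inE andbT.
set A := porbit s @: Rs; set B := (fun x => porbit s (p x)) @: Rs.
have AB : porbits s = A :|: B.
  apply/setP => O; rewrite inE; apply/imsetP/orP => [[y _ ->]|].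
    set z := fingraph.root (pair_rel p r) y.
    have Rz : z \in Rs by rewrite inE fingraph.roots_root.
    have : connect (pair_rel p r) z y by rewrite csym fingraph.connect_root.
    rewrite connect_pair_rel => /orP [] H; [left|right]; apply/imsetP;
      by exists z => //; apply/eqP; rewrite eq_porbit_mem.
  by case=> /imsetP [x _ ->]; [exists x | exists (p x)].
have A_inj : {in Rs &, injective (porbit s)}.
  move=> x1 x2; rewrite !inE => r1 r2 /eqP; rewrite eq_porbit_mem => H.
  by apply: esym (root_eq _ _ r2 r1 _); rewrite connect_pair_rel inE H.
have B_inj : {in Rs &, injective (fun x => porbit s (p x))}.
  move=> x1 x2; rewrite !inE => r1 r2 /eqP.
  rewrite eq_porbit_mem mem_porbit_invol => H.
  by apply: esym (root_eq _ _ r2 r1 _); rewrite connect_pair_rel inE H.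
have AB0 : A :&: B = set0.
  apply/setP => O; rewrite !inE; apply/negP.
  case/andP => /imsetP [x1 r1 ->] /imsetP [x2 r2 /eqP].
  rewrite eq_porbit_mem => H; move: r1 r2; rewrite !inE => r1 r2.
  have ex : x2 = x1.
    by apply: root_eq r2 r1 _; rewrite connect_pair_rel inE H orbT.
  by move: (invol_notin_porbit x1); rewrite ex in H; rewrite porbit_sym H.
rewrite AB cardsU AB0 cards0 subn0 (card_in_imset A_inj) (card_in_imset B_inj).
by rewrite addnn.
Qed.

End PairPerm.

(* Replacing the chords [{a, c}], [{b, d}] of [r] by [{a, b}], [{c, d}] (resp.
   [{a, d}], [{b, c}]) multiplies [s] by [tperm b c] then [tperm a d] (resp.
   [tperm c d] then [tperm a b]); see [pair_perm_repair]. *)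
Section Skein.
Variable T : finType.
Variables p r : {ffun T -> T}.
Hypotheses (pK : involutive p) (rK : involutive r).
Hypotheses (p_fix : forall x, p x != x) (r_fix : forall x, r x != x).
Variables a b c d : T.
Hypotheses (ab : a != b) (ad : a != d) (bc : b != c) (cd : c != d).
Hypotheses (rac : r a = c) (rbd : r b = d).
Local Open Scope group_scope.
Local Notation s := (pair_perm p r).
Local Notation u := (tperm b c * s).
Local Notation v := (tperm c d * s).

Let porbit_pF x : (porbit s (p x) == porbit s x) = false.
Proof. by apply/negbTE; rewrite eq_porbit_mem invol_notin_porbit. Qed.

Let porbit_pE x y : (porbit s (p x) == porbit s (p y)) = (porbit s x == porbit s y).
Proof. by rewrite !eq_porbit_mem mem_porbit_invol. Qed.

Let porbit_c : porbit s c = porbit s (p a).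
Proof.
apply/eqP; rewrite eq_sym eq_porbit_mem.
by rewrite -[a]rK rac -pair_permE // mem_porbit_perm.
Qed.

Let porbit_d : porbit s d = porbit s (p b).
Proof.
apply/eqP; rewrite eq_sym eq_porbit_mem.
by rewrite -[b]rK rbd -pair_permE // mem_porbit_perm.
Qed.

Let porbit_ab : (b \in porbit s a) = (c \in porbit s d).
Proof. by rewrite -!eq_porbit_mem porbit_c porbit_d porbit_pE eq_sym. Qed.

Let porbit_ad : (d \in porbit s a) = (b \in porbit s c).
Proof.
by rewrite -!eq_porbit_mem porbit_d porbit_c -{1}[a]pK porbit_pE eq_sym.
Qed.

Let c_notin_a : c \notin porbit s a.
Proof. by rewrite -eq_porbit_mem porbit_c porbit_pF. Qed.

Lemma skein_separated : (b \notin porbit s c) || (c \notin porbit s d).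
Proof.
rewrite -!eq_porbit_mem porbit_c porbit_d porbit_pE -negb_and.
by apply: contraFN (porbit_pF a) => /andP [/eqP -> /eqP ->].
Qed.

Lemma skein_separated_ad :
  (a \notin porbit u d) = (b \notin porbit s c) && (c \notin porbit s d).
Proof.
have [b_c | b_Nc] /= := boolP (b \in porbit s c).
  have b_Na : b \notin porbit s a.
    by apply: contra c_notin_a; apply: porbit_trans; rewrite porbit_sym.
  by rewrite porbit_sym porbit_tpermM_out ?porbit_ad ?b_c.
have [c_d | c_Nd] /= := boolP (c \in porbit s d).
  have a_b : a \in porbit u b.
    by apply: porbit_tpermM_mergel b_Nc _; rewrite porbit_sym porbit_ab.
  have d_b : d \in porbit u b by apply: porbit_tpermM_merger b_Nc _; rewrite porbit_sym.
  by rewrite (porbit_trans a_b) // porbit_sym.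
by rewrite porbit_sym porbit_tpermM_out ?porbit_ab ?porbit_ad.
Qed.

Lemma skein_separated_ab :
  (a \notin porbit v b) = (b \notin porbit s c) && (c \notin porbit s d).
Proof.
have [b_c | b_Nc] /= := boolP (b \in porbit s c).
  have c_Nd : c \notin porbit s d by have := skein_separated; rewrite b_c.
  have b_v : b \in porbit v c by apply: porbit_tpermM_mergel c_Nd _.
  have a_v : a \in porbit v c.
    by apply: porbit_tpermM_merger c_Nd _; rewrite porbit_sym porbit_ad.
  by rewrite porbit_sym (porbit_trans b_v) // porbit_sym.
by rewrite porbit_sym porbit_tpermM_out ?porbit_ab ?porbit_ad.
Qed.

Local Notation N := #|porbits s|.
Local Notation N1 := #|porbits (tperm a d * u)|.
Local Notation N2 := #|porbits (tperm a b * v)|.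

Lemma skein_counts :
  [\/ N1 + 2 = N /\ N2 + 2 = N, N1 = N /\ N2 = N + 2 | N1 = N + 2 /\ N2 = N]%N.
Proof.
have := card_porbits_tpermM s bc; have := card_porbits_tpermM u ad.
have := card_porbits_tpermM s cd; have := card_porbits_tpermM v ab.
rewrite skein_separated_ad skein_separated_ab.
move: skein_separated N N1 N2 #|porbits u| #|porbits v|.
case: (b \notin _); case: (c \notin _) => //= _ x y *;
  by [apply: Or31; lia | apply: Or32; lia | apply: Or33; lia].
Qed.

End Skein.

Lemma neq_eqF (T : eqType) (a b : T) :
  a != b -> ((a == b) = false) * ((b == a) = false).
Proof. by move=> ab; rewrite [b == a]eq_sym (negbTE ab). Qed.

Lemma skein_pow (R : comNzRingType) (c c1 c2 N N1 N2 : nat) :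
  c.*2 = N -> c1.*2 = N1 -> c2.*2 = N2 ->
  [\/ N1 + 2 = N /\ N2 + 2 = N, N1 = N /\ N2 = N + 2 | N1 = N + 2 /\ N2 = N]%N ->
  ((-2) ^+ c = - (-2) ^+ c1 - (-2) ^+ c2 :> R)%R.
Proof.
move=> <- <- <- [] [E1 E2].
- have -> : c = c1.+1 by lia. have -> : c2 = c1 by lia. by rewrite exprS; ring.
- have -> : c1 = c by lia. have -> : c2 = c.+1 by lia. by rewrite exprS; ring.
- have -> : c1 = c.+1 by lia. have -> : c2 = c by lia. by rewrite exprS; ring.
Qed.

Section Pairings.
Variable n : nat.
Implicit Types (p r s : pairing_of n) (x y : 'I_(n.*2)).

Lemma pairingK s : is_pairing s -> involutive s.
Proof. by move=> /forallP hs x; case/andP: (hs x) => _ /eqP. Qed.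

Lemma pairingF s : is_pairing s -> forall x, s x != x.
Proof. by move=> /forallP hs x; case/andP: (hs x). Qed.

Lemma ncomp_pair_perm p r : is_pairing p -> is_pairing r ->
  (ncomp p r).*2 = #|porbits (pair_perm p r)|.
Proof.
move=> hp hr.
exact: n_comp_pair_rel (pairingK hp) (pairingK hr) (pairingF hp) (pairingF hr).
Qed.

Lemma repair_swap s x1 y1 x2 y2 : repair s x1 y1 x2 y2 = repair s x1 y1 y2 x2.
Proof.
apply/ffunP => z; rewrite !ffunE.
case: ifP => // _; case: ifP => // _; case: (eqVneq z x2) => [->|_ //].
by case: eqVneq.
Qed.

Lemma repair_notin s x1 y1 x2 y2 z :
  z \notin [:: x1; y1; x2; y2] -> repair s x1 y1 x2 y2 z = s z.
Proof. by rewrite !inE ffunE; do 4!case: eqP => //. Qed.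

Lemma pairing_nested_neq s x y : is_pairing s -> x != y -> y != s x ->
  x != s y /\ s y != s x.
Proof.
move=> hs xy ysx; have sK := pairingK hs; split.
  by apply: contraNneq ysx => ->; rewrite sK.
by rewrite (inj_eq (can_inj sK)) eq_sym.
Qed.

Lemma repair_nestedE s x y : is_pairing s ->
  repair s x (s y) y (s x) = repair s x (s y) (s x) (s (s y)).
Proof. by move=> hs; rewrite repair_swap pairingK. Qed.

Section Resolve.
Variables (s : pairing_of n) (x y : 'I_(n.*2)).
Hypotheses (hs : is_pairing s) (xy : x != y) (ysx : y != s x).
Let sK := pairingK hs.
Let xsy := (pairing_nested_neq hs xy ysx).1.
Let sxsy : s x != s y. Proof. by rewrite eq_sym (pairing_nested_neq hs xy ysx).2. Qed.
Let eqF := (neq_eqF xy, neq_eqF ysx, neq_eqF (pairingF hs x),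
          neq_eqF (pairingF hs y), neq_eqF sxsy, neq_eqF xsy).

Lemma repair_tperm :
  repair s x y (s x) (s y) =1 s \o tperm (s x) y \o tperm x (s y).
Proof.
move=> z; rewrite ffunE /= !permE /=.
have [zx|zx] := eqVneq z x; first by subst z; rewrite !eqF sK.
have [zy|zy] := eqVneq z y; first by subst z; rewrite !eqF ?eqxx ?sK.
have [zsx|zsx] := eqVneq z (s x); first by rewrite zsx !eqF ?eqxx.
have [zsy|zsy] := eqVneq z (s y); first by rewrite ?zsy !eqF ?eqxx ?sK.
by rewrite (negbTE zsx) (negbTE zy).
Qed.

Lemma is_pairing_repair : is_pairing (repair s x y (s x) (s y)).
Proof.
apply/forallP => z; rewrite !ffunE.
have [zx|zx] := eqVneq z x; first by subst z; rewrite !eqF ?eqxx.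
have [zy|zy] := eqVneq z y; first by subst z; rewrite !eqF ?eqxx.
have [zsx|zsx] := eqVneq z (s x); first by rewrite ?zsx !eqF ?eqxx.
have [zsy|zsy] := eqVneq z (s y); first by rewrite ?zsy !eqF ?eqxx.
by rewrite pairingF // !(can2_eq sK sK) !sK !ifN // eqxx.
Qed.

Lemma pair_perm_repair p : is_pairing p ->
  pair_perm p (repair s x y (s x) (s y))
  = (tperm x (s y) * (tperm (s x) y * pair_perm p s))%g.
Proof.
move=> hp; apply/permP => z; have pK := pairingK hp.
rewrite (pair_permE pK (pairingK is_pairing_repair)) permM [in RHS]permM.
by rewrite (pair_permE pK sK) repair_tperm.
Qed.

End Resolve.

Lemma is_pairing_resolve s x y : is_pairing s -> x != y -> y != s x ->
  is_pairing (repair s x y (s x) (s y)) /\ is_pairing (repair s x (s y) y (s x)).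
Proof.
move=> hs xy ysx; have [xsy sysx] := pairing_nested_neq hs xy ysx.
by rewrite repair_nestedE //; split; apply: is_pairing_repair.
Qed.

Lemma ncomp_skein p s x y : is_pairing p -> is_pairing s -> x != y -> y != s x ->
  ((-2) ^+ ncomp p s = - (-2) ^+ ncomp p (repair s x y (s x) (s y))
                      - (-2) ^+ ncomp p (repair s x (s y) y (s x)) :> int)%R.
Proof.
move=> hp hs xy ysx; have sK := pairingK hs.
have [xsy sysx] := pairing_nested_neq hs xy ysx.
have sxsy : s x != s y by rewrite eq_sym.
rewrite repair_nestedE //.
(* Generalizing the resolved pairings keeps unification from unfolding [ncomp]. *)
have := pair_perm_repair hs xsy sysx hp; have := pair_perm_repair hs xy ysx hp.
move: (is_pairing_repair hs xsy sysx) (is_pairing_repair hs xy ysx).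
move: (repair s x y _ _) (repair s x (s y) _ _) => s1 s2 h2 h1 E1 E2.
apply: (skein_pow _ (ncomp_pair_perm hp hs) (ncomp_pair_perm hp h1)
                  (ncomp_pair_perm hp h2)).
rewrite E1 E2 sK [tperm (s x) y]tpermC.
exact (skein_counts (pairingK hp) sK (pairingF hp) (pairingF hs) xy xsy ysx sxsy
  erefl erefl).
Qed.

End Pairings.

Definition crossb (u v su sv : nat) : bool := [&& u < v, v < su & su < sv].

Definition chord_crossings (x y v w : nat) : nat :=
  crossb x v y w + crossb v x w y + (crossb y v x w + crossb v y w x).

(* A chord [{v, w}] crosses [{x, y}] iff it separates [x] from [y].  If it
   separates some of [a < b < c < d] from the others it crosses both chords of
   the crossing pair, and at most two chords of either resolution. *)
Lemma chord_crossings_resolve (a b c d v w : nat) :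
  a < b -> b < c -> c < d -> all (fun z => (v != z) && (w != z)) [:: a; b; c; d] ->
  chord_crossings a b v w + chord_crossings c d v w
    <= chord_crossings a c v w + chord_crossings b d v w /\
  chord_crossings a d v w + chord_crossings b c v w
    <= chord_crossings a c v w + chord_crossings b d v w.
Proof.
rewrite /chord_crossings /crossb /= !andbT => ab bc cd.
case/and4P => /andP [va wa] /andP [vb wb] /andP [vc wc] /andP [vd wd].
case: (ltngtP v a) va => // ? _; case: (ltngtP v b) vb => // ? _;
case: (ltngtP v c) vc => // ? _; case: (ltngtP v d) vd => // ? _;
case: (ltngtP w a) wa => // ? _; case: (ltngtP w b) wb => // ? _;
case: (ltngtP w c) wc => // ? _; case: (ltngtP w d) wd => // ? _;
lia.
Qed.

Lemma sum_split_mem (I : finType) (S : seq I) (F : I -> I -> nat) :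
  \sum_u \sum_v F u v = \sum_(u in S) \sum_(v in S) F u v
    + \sum_(v | v \notin S) \sum_(u in S) (F u v + F v u)
    + \sum_(u | u \notin S) \sum_(v | v \notin S) F u v.
Proof.
rewrite (bigID (mem S)) /=.
under eq_bigr => u _ do rewrite (bigID (mem S)) /=.
under [X in _ + X]eq_bigr => u _ do rewrite (bigID (mem S)) /=.
rewrite !big_split /= -!addnA; congr (_ + _).
rewrite addnA; congr (_ + _).
under [RHS]eq_bigr => v _ do rewrite big_split.
by rewrite big_split /= exchange_big.
Qed.

Section CrossingNumber.
Variable n : nat.
Implicit Types (s : pairing_of n).

Definition crossing_number s : nat := \sum_u \sum_v crosses s u v.

Lemma crossing_number_le s : crossing_number s <= (n.*2) ^ 2.
Proof.
apply: (@leq_trans (\sum_(u : 'I_(n.*2)) \sum_(v : 'I_(n.*2)) 1)).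
  by apply: leq_sum => u _; apply: leq_sum => v _; apply: leq_b1.
by rewrite !sum_nat_const !card_ord muln1.
Qed.

Lemma crossing_number0_planar s : crossing_number s = 0 -> planar s.
Proof.
move=> s0; apply/forallP => a; apply/forallP => b; apply/negP => ab.
suff : 0 < crossing_number s by rewrite s0.
by rewrite /crossing_number (bigD1 a) //= (bigD1 b) //= ab.
Qed.

Section Decrease.
Variables (s : pairing_of n) (a b : 'I_(n.*2)).
Hypotheses (hs : is_pairing s) (hab : crosses s a b).
Local Notation c := (s a).
Local Notation d := (s b).
Local Notation S := [:: a; b; c; d].

Let lab : a < b. Proof. by case/and3P: hab. Qed.
Let lbc : b < c. Proof. by case/and3P: hab. Qed.
Let lcd : c < d. Proof. by case/and3P: hab. Qed.
Let sK := pairingK hs.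

Let neq (x y : 'I_(n.*2)) : x < y -> x != y.
Proof. by apply: contraTneq => ->; rewrite ltnn. Qed.

Let eqF := (neq_eqF (neq lab), neq_eqF (neq lbc), neq_eqF (neq lcd),
          neq_eqF (neq (ltn_trans lab lbc)), neq_eqF (neq (ltn_trans lbc lcd)),
          neq_eqF (neq (ltn_trans lab (ltn_trans lbc lcd)))).

Let uniqS : uniq S.
Proof. by rewrite /= !inE !eqF. Qed.

Let notin_S_perm z : z \notin S -> s z \notin S.
Proof.
rewrite !inE -!(can2_eq sK sK) !sK; apply: contra.
by case/or4P => ->; rewrite ?orbT.
Qed.

Lemma crossing_number_lt (s' : pairing_of n) :
  {in [predC S], s' =1 s} ->
  {in S &, forall u v, ~~ crosses s' u v} ->
  {in [predC S], forall v, \sum_(u in S) (crosses s' u v + crosses s' v u)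
                         <= \sum_(u in S) (crosses s u v + crosses s v u)} ->
  crossing_number s' < crossing_number s.
Proof.
move=> s's S'0 S'le; rewrite /crossing_number !(sum_split_mem S).
have -> : \sum_(u in S) \sum_(v in S) (crosses s' u v : nat) = 0.
  by apply: big1 => u uS; apply: big1 => v vS; rewrite (negbTE (S'0 u v uS vS)).
have S_pos : 0 < \sum_(u in S) \sum_(v in S) (crosses s u v : nat).
  by rewrite (bigD1 a) ?inE ?eqxx //= (bigD1 b) ?inE ?eqxx ?orbT //= hab.
have -> : \sum_(u | u \notin S) \sum_(v | v \notin S) (crosses s' u v : nat)
        = \sum_(u | u \notin S) \sum_(v | v \notin S) (crosses s u v : nat).
  apply: eq_bigr => u uS; apply: eq_bigr => v vS.
  by rewrite /crosses !s's // inE.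
rewrite add0n ltn_add2r; apply: leq_add S_pos _.
by apply: leq_sum => v vS; apply: S'le; rewrite inE.
Qed.

Let notin_S_chord v : v \notin S ->
  all (fun z : nat => (val v != z) && (val (s v) != z)) [:: val a; val b; val c; val d].
Proof.
move=> vS; have := notin_S_perm vS; move: vS.
by rewrite !inE /= !val_eqE !negb_or => /and4P [-> -> -> ->] /and4P [-> -> -> ->].
Qed.

Lemma crossing_number_resolve_adjacent :
  crossing_number (repair s a b c d) < crossing_number s.
Proof.
apply: crossing_number_lt.
- by move=> z; rewrite inE => /repair_notin.
- move=> u v; rewrite !inE => /or4P [] /eqP -> /or4P [] /eqP ->;
  rewrite /crosses !ffunE !eqF ?eqxx /=; apply/negP => /and3P []; lia.
move=> v; rewrite inE => vS.
rewrite -!big_uniq // !big_cons !big_nil /crosses (repair_notin _ vS) !ffunE.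
rewrite !eqF !eqxx !sK /=.
rewrite !addn0 [X in X <= _]addnA [X in _ <= X]addnA [X in _ <= X]addnACA.
exact: (chord_crossings_resolve lab lbc lcd (notin_S_chord vS)).1.
Qed.

Lemma crossing_number_resolve_nested :
  crossing_number (repair s a d b c) < crossing_number s.
Proof.
have SE : [:: a; d; b; c] =i S.
  move=> z; rewrite !inE.
  by case: (z == a); case: (z == b); case: (z == c); case: (z == d).
apply: crossing_number_lt.
- by move=> z; rewrite inE -SE => /repair_notin.
- move=> u v; rewrite !inE => /or4P [] /eqP -> /or4P [] /eqP ->;
  rewrite /crosses !ffunE !eqF ?eqxx /=; apply/negP => /and3P []; lia.
move=> v; rewrite inE => vS; have vS' := vS; rewrite -SE in vS'.
rewrite -!big_uniq // !big_cons !big_nil /crosses (repair_notin _ vS') !ffunE.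
rewrite !eqF !eqxx !sK /= !addn0 [X in X <= _]addnA.
rewrite [X in _ + X <= _]addnC [X in X <= _]addnACA.
rewrite [X in _ <= X]addnA [X in _ <= X]addnACA.
exact: (chord_crossings_resolve lab lbc lcd (notin_S_chord vS)).2.
Qed.

End Decrease.

End CrossingNumber.

Lemma card_ord_between m (a b : nat) : a < b -> b <= m ->
  #|[set y : 'I_m | a < y < b]| = b - a - 1.
Proof.
move=> ab bm; rewrite -sum1_card big_mkcond /=.
rewrite (eq_bigr (fun i : 'I_m => (a < i < b) : nat)); last first.
  by move=> i _; rewrite inE; case: (_ && _).
rewrite -(big_mkord xpredT (fun i => (a < i < b) : nat)).
rewrite (big_cat_nat _ (n := a.+1)) //=; last by lia.
rewrite (big_cat_nat _ (n := b) (m := a.+1)) //= big1_seq; last first.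
  by move=> i; rewrite mem_index_iota => /andP [_ /andP [_ ia]]; rewrite ltnNge -ltnS ia.
rewrite [X in _ + (_ + X)]big1_seq; last first.
  by move=> i; rewrite mem_index_iota => /andP [_ /andP [bi _]]; rewrite andbC ltnNge bi.
rewrite (eq_big_seq (fun _ => 1)); last first.
  by move=> i; rewrite mem_index_iota => /andP [-> ->].
by rewrite sum_nat_const_nat muln1; lia.
Qed.

Section PlanarParity.
Variables (n : nat) (s : pairing_of n).
Hypotheses (hs : is_pairing s) (pl : planar s).
Let sK := pairingK hs.

Let nocross u v : crosses s u v = false.
Proof. by apply/negbTE; move/forallP: pl => /(_ u) /forallP. Qed.

(* The points strictly inside the chord [{a, s a}] are paired among themselves,
   so there is an even number of them. *)
Let odd_pairing_lt (a : 'I_(n.*2)) : a < s a -> odd (s a) = ~~ odd a.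
Proof.
move=> a_sa; set I := [set y : 'I_(n.*2) | a < y < s a].
have I_s y : y \in I -> s y \in I.
  rewrite !inE => /andP [ay ysa].
  have sya : s y != a by apply: contraTneq ysa => <-; rewrite sK ltnn.
  have sysa : s y != s a by apply: contraTneq ay => /(can_inj sK) ->; rewrite ltnn.
  case: (ltngtP (s y) a) => [syLa|aLsy|/val_inj/eqP]; last by rewrite (negbTE sya).
    by move: (nocross (s y) a); rewrite /crosses sK syLa ay ysa.
  case: (ltngtP (s y) (s a)) => [//|saLsy|/val_inj/eqP]; last first.
    by rewrite (negbTE sysa).
  by move: (nocross a y); rewrite /crosses ay ysa saLsy.
set L := [set y in I | y < s y].
have IE : I = L :|: s @: L.
  apply/setP => y; rewrite !inE; apply/idP/orP => [yI|].
    case: (ltngtP y (s y)) => [ysy|sy_y|/val_inj/esym/eqP]; first by left; rewrite yI.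
      right; apply/imsetP; exists (s y); last by rewrite sK.
      by rewrite inE sK sy_y andbT; apply: I_s; rewrite inE.
    by rewrite (negbTE (pairingF hs y)).
  case=> [/andP [] //|/imsetP [z]]; rewrite inE => /andP [zI _] ->.
  by move: (I_s z zI); rewrite inE.
have L_disj : L :&: s @: L = set0.
  apply/setP => y; rewrite !inE; apply/negP => /andP [/andP [_ ysy] /imsetP [z]].
  by rewrite inE => /andP [_ zsz] yE; move: ysy; rewrite yE sK ltnNge ltnW.
have := card_ord_between a_sa (ltnW (ltn_ord (s a))).
rewrite -/I IE cardsU L_disj cards0 subn0 card_imset => [cardI|].
  have -> : (s a : nat) = (a + 1 + (#|L| + #|L|))%N by lia.
  by rewrite addnn !oddD odd_double addbF addbT.
exact: can_inj sK.
Qed.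

Lemma planar_odd_pairing x : odd (s x) = ~~ odd x.
Proof.
case: (ltngtP x (s x)) => [|sxLx|/val_inj/esym/eqP]; first exact: odd_pairing_lt.
  by have := @odd_pairing_lt (s x); rewrite sK => /(_ sxLx) ->; rewrite negbK.
by rewrite (negbTE (pairingF hs x)).
Qed.

End PlanarParity.

Section OddEvenSign.
Variable n : nat.
Implicit Types (p r s : pairing_of n) (k : 'I_n).

Lemma ord_double_proof k : k.*2 < n.*2.
Proof. by rewrite ltn_double. Qed.

Definition ord_double k : 'I_(n.*2) := Ordinal (ord_double_proof k).

Lemma ord_double_inj : injective ord_double.
Proof. by move=> k1 k2 /(congr1 val) /double_inj /val_inj. Qed.

Definition oe_perm s : 'S_n :=
  ffun_perm [ffun k => insubd k (s (ord_double k))./2].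

Section OddEvenPerm.
Variable s : pairing_of n.
Hypotheses (hs : is_pairing s) (s_oe : forall x, odd (s x) = ~~ odd x).

Let oe_val k : val ([ffun k => insubd k (s (ord_double k))./2] k) = (s (ord_double k))./2.
Proof. by rewrite ffunE val_insubd ltn_half_double ltn_ord. Qed.

Let pairing_double_half k : val (s (ord_double k)) = ((s (ord_double k))./2).*2.+1.
Proof. by rewrite -[LHS]odd_double_half s_oe odd_double. Qed.

Lemma oe_permE k : val (s (ord_double k)) = (oe_perm s k).*2.+1.
Proof.
rewrite /oe_perm ffun_permE ?oe_val //.
move=> k1 k2 /(congr1 val); rewrite !oe_val => E.
apply/ord_double_inj/(can_inj (pairingK hs))/val_inj.
by rewrite (pairing_double_half k1) (pairing_double_half k2) E.
Qed.

Lemma at_nat_double k : at_nat s k.*2 = s (ord_double k).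
Proof.
by rewrite /at_nat insubT ?ord_double_proof //= => ?; congr (val (s _)); apply: val_inj.
Qed.

Lemma sign_OE_oe_perm : (sign_OE s = (-1) ^+ odd_perm (oe_perm s))%R.
Proof.
rewrite /sign_OE; case: pickP => [q /forallP Hq | /(_ (oe_perm s)) /negP []].
  congr (_ ^+ _)%R; congr odd_perm; apply/permP => k; apply: val_inj.
  by rewrite (eqP (Hq k)) at_nat_double oe_permE /= uphalf_double.
by apply/forallP => k; rewrite at_nat_double oe_permE /= uphalf_double.
Qed.

End OddEvenPerm.

Section TwoOddEven.
Variables p r : pairing_of n.
Hypotheses (hp : is_pairing p) (hr : is_pairing r).
Hypotheses (p_oe : forall x, odd (p x) = ~~ odd x).
Hypotheses (r_oe : forall x, odd (r x) = ~~ odd x).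
Local Open Scope group_scope.
Local Notation s := (pair_perm p r).
Local Notation q := (oe_perm r * (oe_perm p)^-1).
Let pK := pairingK hp.
Let rK := pairingK hr.

Lemma pair_perm_double k : s (ord_double k) = ord_double (q k).
Proof.
rewrite (pair_permE pK rK); apply: (can_inj pK); rewrite pK; apply: val_inj.
by rewrite (oe_permE hr r_oe) (oe_permE hp p_oe) permM permKV.
Qed.

Lemma porbit_pair_perm_double k : porbit s (ord_double k) = ord_double @: porbit q k.
Proof.
have sX i : (s ^+ i) (ord_double k) = ord_double ((q ^+ i) k).
  elim: i => [|i IHi]; first by rewrite !expg0 !perm1.
  by rewrite !expgSr (permM (s ^+ i)) (permM (q ^+ i)) IHi pair_perm_double.
apply/setP => y; apply/porbitP/imsetP => [[i ->]|[z /porbitP [i ->] ->]].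
  by exists ((q ^+ i) k); rewrite ?mem_porbit ?sX.
by exists i; rewrite sX.
Qed.

Lemma odd_porbit_pair_perm x y : y \in porbit s x -> odd y = odd x.
Proof.
case/porbitP => i ->; elim: i => [|i IHi]; first by rewrite expg0 perm1.
by rewrite expgSr permM (pair_permE pK rK) p_oe r_oe negbK.
Qed.

Lemma card_porbits_pair_perm_oe : #|porbits s| = (#|porbits q|).*2.
Proof.
set Es := [set porbit s (ord_double k) | k : 'I_n].
set Os := [set porbit s (p (ord_double k)) | k : 'I_n].
have cardE : #|Es| = #|porbits q|.
  have -> : Es = (fun O : {set 'I_n} => ord_double @: O) @: porbits q.
    rewrite /porbits -imset_comp; apply: eq_imset => k.
    by rewrite /= porbit_pair_perm_double.
  by rewrite card_imset //; apply/imset_inj/ord_double_inj.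
have cardO : #|Os| = #|Es|.
  have pOE : Os = (fun O : {set 'I_(n.*2)} => p @: O) @: Es.
    rewrite -imset_comp; apply: eq_imset => k /=; apply/setP => y.
    apply/idP/imsetP => [yO|[z zO ->]]; first exists (p y); rewrite ?pK //.
      by rewrite -(mem_porbit_invol pK rK) pK.
    by rewrite (mem_porbit_invol pK rK).
  by rewrite pOE card_imset //; apply: imset_inj; apply: can_inj pK.
have even_double (x : 'I_(n.*2)) : ~~ odd x -> exists k, x = ord_double k.
  move=> ex; have xn : x./2 < n by rewrite ltn_half_double.
  by exists (Ordinal xn); apply: val_inj; rewrite /= -[LHS]odd_double_half (negbTE ex).
have EOs : porbits s = Es :|: Os.
  apply/setP => O; rewrite inE; apply/imsetP/orP => [[x _ ->]|].
    have [ox|ex] := boolP (odd x).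
      have [|k pxE] := even_double (p x); first by rewrite p_oe ox.
      by right; apply/imsetP; exists k; rewrite // -pxE pK.
    by have [k ->] := even_double x ex; left; apply/imsetP; exists k.
  by case=> /imsetP [k _ ->]; [exists (ord_double k) | exists (p (ord_double k))].
have EOs0 : Es :&: Os = set0.
  apply/setP => O; rewrite !inE; apply/negP => /andP [/imsetP [k _ ->]].
  case/imsetP => j _ /eqP; rewrite eq_porbit_mem => /odd_porbit_pair_perm.
  by rewrite p_oe /= !odd_double.
by rewrite EOs cardsU EOs0 cards0 subn0 cardO cardE addnn.
Qed.

Lemma sign_OE_pair_perm :
  (sign_OE p * (-1) ^+ ncomp p r * (-1) ^+ n = sign_OE r :> int)%R.
Proof.
have cq : ncomp p r = #|porbits q|.
  by apply: double_inj; rewrite (ncomp_pair_perm hp hr) card_porbits_pair_perm_oe.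
have oq : odd_perm q = odd_perm (oe_perm r) (+) odd_perm (oe_perm p).
  by rewrite odd_permM odd_permV.
have oq' : odd_perm q = odd n (+) odd #|porbits q| by rewrite /odd_perm card_ord.
rewrite (sign_OE_oe_perm hp p_oe) (sign_OE_oe_perm hr r_oe) cq.
rewrite -(signr_odd _ #|porbits q|) -(signr_odd _ n) -!signr_addb; congr (_ ^+ _)%R.
move: oq oq'; case: (odd_perm q); case: (odd_perm (oe_perm r));
  by case: (odd_perm (oe_perm p)); case: (odd n); case: (odd #|porbits q|).
Qed.

End TwoOddEven.

End OddEvenSign.

Lemma Pcoef_fuel_planar n f (sigma rho : pairing_of n) :
  planar rho -> Pcoef_fuel f sigma rho = (sigma == rho).
Proof. by case: f => [|f] /= ->. Qed.

Lemma Pcoef_fuel_resolve n f (rho : pairing_of n) : ~~ planar rho ->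
  exists a b, crosses rho a b /\ forall sigma, Pcoef_fuel f.+1 sigma rho
    = (- Pcoef_fuel f sigma (repair rho a b (rho a) (rho b))
       - Pcoef_fuel f sigma (repair rho a (rho b) b (rho a)))%R.
Proof.
move=> npl; have Pstep sigma : Pcoef_fuel f.+1 sigma rho =
    match [pick ab | crosses rho ab.1 ab.2] with
    | Some (a, b) => (- Pcoef_fuel f sigma (repair rho a b (rho a) (rho b))
                      - Pcoef_fuel f sigma (repair rho a (rho b) b (rho a)))%R
    | None => 0%R
    end by rewrite /= (negbTE npl).
move: Pstep; case: pickP => [[a b] /= hab Pstep | none _]; first by exists a, b.
case/negP: npl; apply/forallP => a; apply/forallP => b.
by have /= -> := none (a, b).
Qed.

Lemma mulr_skein (R : comNzRingType) (k x y z : R) :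
  (x = - y - z -> k * x = - (k * y) - (k * z))%R.
Proof. by move=> ->; ring. Qed.

Lemma mulr_sign_pow2 (R : comNzRingType) (k : R) (c m : nat) :
  (k * (-1) ^+ c * (-1) ^+ m * 2 ^+ c = k * (-1) ^+ m * (-2) ^+ c)%R.
Proof.
rewrite -(mulN1r 2) exprMn.
by move: ((-1) ^+ c)%R ((-1) ^+ m)%R (2 ^+ c)%R => x y z; ring.
Qed.

Section Main.
Variables (n : nat) (pi : pairing_of n).
Hypotheses (hpi : is_pairing pi) (pl : planar pi).
Local Open Scope ring_scope.

Let weight (sigma : pairing_of n) : int := sign_OE sigma * 2 ^+ ncomp pi sigma.
Let lhs (rho : pairing_of n) : int := sign_OE pi * (-1) ^+ n * (-2) ^+ ncomp pi rho.

Let lhs_planar rho : is_pairing rho -> planar rho -> lhs rho = weight rho.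
Proof.
move=> hr pr; have oe := planar_odd_pairing.
rewrite /lhs /weight -(sign_OE_pair_perm hpi hr (oe _ _ hpi pl) (oe _ _ hr pr)).
by rewrite -mulr_sign_pow2.
Qed.

Lemma sum_Pcoef_fuel f rho : is_pairing rho -> (crossing_number rho <= f)%N ->
  \sum_(sigma | is_pairing sigma && planar sigma) Pcoef_fuel f sigma rho * weight sigma
  = lhs rho.
Proof.
have planar_case g rho' : is_pairing rho' -> planar rho' ->
    \sum_(sigma | is_pairing sigma && planar sigma)
      Pcoef_fuel g sigma rho' * weight sigma = lhs rho'.
  move=> hr pr; rewrite (bigD1 rho') ?hr ?pr //= Pcoef_fuel_planar // eqxx mul1r.
  rewrite big1 ?addr0 ?lhs_planar // => sigma /andP [_ /negbTE ne].
  by rewrite Pcoef_fuel_planar // ne mul0r.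
elim: f rho => [|f IHf] rho hr.
  by rewrite leqn0 => /eqP /crossing_number0_planar; apply: planar_case.
move=> le_f; have [pr|npr] := boolP (planar rho); first exact: planar_case.
have [a [b [hab Pstep]]] := Pcoef_fuel_resolve f npr.
have /and3P [ab ba _] := hab.
have xy : a != b by apply: contraTneq ab => ->; rewrite ltnn.
have ysx : b != rho a by apply: contraTneq ba => ->; rewrite ltnn.
have [h1 h2] := is_pairing_resolve hr xy ysx.
have lt1 := crossing_number_resolve_adjacent hr hab.
have lt2 := crossing_number_resolve_nested hr hab.
under eq_bigr => sigma _ do rewrite Pstep mulrBl mulNr.
rewrite big_split /= !sumrN (IHf _ h1) ?(IHf _ h2);
  try by rewrite -ltnS (leq_trans _ le_f).
by rewrite /lhs; symmetry; apply: mulr_skein; apply: ncomp_skein.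
Qed.

End Main.

Unset Implicit Arguments.
Local Open Scope ring_scope.

Theorem mainTheorem13 (n : nat) (rho pi : pairing_of n) :
  is_pairing rho -> is_pairing pi -> planar pi ->
  sign_OE pi * (-1) ^+ ncomp pi rho * (-1) ^+ n * 2 ^+ ncomp pi rho
  = \sum_(sigma : pairing_of n | is_pairing sigma && planar sigma)
      Pcoef sigma rho * sign_OE sigma * 2 ^+ ncomp pi sigma.
Proof.
move=> hrho hpi pl; rewrite mulr_sign_pow2 /Pcoef.
under eq_bigr => sigma _ do rewrite -mulrA.
by rewrite (sum_Pcoef_fuel hpi pl hrho (crossing_number_le rho)).
Qed.
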